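(* Let $(X,\Sigma)$ be a measurable space, $\mathcal{E}\subseteq\Sigma$ a paving, $\mathbf{F}_0^2\subseteq\mathbf{F}\times\mathbf{F}$ a nonempty set of pairs, $\boldsymbol{\mu}=(\mu_t)_{t\ge0}$ a nonincreasing family of monotone measures on $\Sigma$, and $\mathscr{A}=\{\mathsf{A}(\cdot|E)\colon E\in\mathcal{E}\}$ a family of conditional aggregation operators which is $1$-quasi-subadditive on $\mathbf{F}_0^2$. Then $$\boldsymbol{\mu}_{\mathscr{A}}(f+g,t)\le\boldsymbol{\mu}_{\mathscr{A}}(f,0.5t)\vee\boldsymbol{\mu}_{\mathscr{A}}(g,0.5t)$$ for every $t\ge0$ and every $(f,g)\in\mathbf{F}_0^2$.
   Context: $a\vee b=\max\{a,b\}$. $\Sigma^0=\Sigma\setminus\{\emptyset\}$. $\mathbf{F}$ denotes the set of all $\Sigma$-measurable, nonnegative, bounded functions $f\colon X\to[0,\infty)$. A monotone measure is a map $\mu\colon\Sigma\to[0,\infty]$ with $\mu(B)\le\mu(C)$ whenever $B\subseteq C$, $\mu(\emptyset)=0$ and $\mu(X)>0$; $\boldsymbol{\mu}$ is nonincreasing if $\mu_s(E)\ge\mu_t(E)$ for all $E\in\Sigma$ and $s<t$. For $E\in\Sigma^0$, a conditional aggregation operator (CAO) w.r.t. $E$ is a map $\mathsf{A}(\cdot|E)\colon\mathbf{F}\to[0,\infty]$ such that (C1) $\mathsf{A}(f|E)\le\mathsf{A}(g|E)$ whenever $f(x)\le g(x)$ for all $x\in E$, and (C2) $\mathsf{A}(\mathbf{1}_{X\setminus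 E}|E)=0$. A paving is a family $\mathcal{E}\subseteq\Sigma$ with $\emptyset\in\mathcal{E}$; $\mathcal{E}^0=\mathcal{E}\setminus\{\emptyset\}$. The family $\mathscr{A}$ consists of CAOs $\mathsf{A}(\cdot|E)$ w.r.t. $E$ for $E\in\mathcal{E}^0$, with the convention $\mathsf{A}(\cdot|\emptyset)=\infty$. It is $1$-quasi-subadditive on $\mathbf{F}_0^2$ if $\mathsf{A}(f+g|E)\le\mathsf{A}(f|E)+\mathsf{A}(g|E)$ for all $(f,g)\in\mathbf{F}_0^2$ and all $E\in\mathcal{E}^0$. The generalized level measure is $\boldsymbol{\mu}_{\mathscr{A}}(f,t)=\sup\{\mu_t(E)\colon \mathsf{A}(f|E)\ge t,\ E\in\mathcal{E}\}$ for $t\ge0$. *)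

From HB Require Import structures.
From mathcomp Require Import all_boot all_order all_algebra.
From mathcomp Require Import all_classical all_reals all_analysis.
Set Implicit Arguments. Unset Strict Implicit. Unset Printing Implicit Defensive.
Import Order.TTheory GRing.Theory Num.Theory.
Local Open Scope classical_set_scope.
Local Open Scope ring_scope.

Section Defs.
Context {d : measure_display} {T : measurableType d} {R : realType}.

Definition Fset : set (T -> R) :=
  [set f : T -> R | measurable_fun setT f /\ (forall x, 0 <= f x) /\
           exists M : R, forall x, f x <= M].

Definition monotone_measure (mu : set T -> \bar R) : Prop :=
  (forall B, measurable B -> (0 <= mu B)%E) /\
  (forall B C, measurable B -> measurable C -> B `<=` C -> (mu B <= mu C)%E) /\
  mu set0 = 0%E /\ (0 < mu setT)%E.

Definition nonincreasing_family (mu : R -> set T -> \bar R) : Prop :=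
  (forall t, 0 <= t -> monotone_measure (mu t)) /\
  (forall s t E, 0 <= s -> s < t -> measurable E -> (mu t E <= mu s E)%E).

Definition paving (P : set (set T)) : Prop :=
  P `<=` measurable /\ P set0.

Definition CAO (E : set T) (AE : (T -> R) -> \bar R) : Prop :=
  (forall f, Fset f -> (0 <= AE f)%E) /\
  (forall f g, Fset f -> Fset g -> (forall x, E x -> f x <= g x) ->
     (AE f <= AE g)%E) /\
  AE (\1_(~` E)) = 0%E.

Definition CAO_family (P : set (set T)) (A : set T -> (T -> R) -> \bar R) : Prop :=
  forall E, P E -> E <> set0 -> CAO E (A E).

Definition quasi_subadditive1 (P : set (set T)) (A : set T -> (T -> R) -> \bar R)
  (F02 : set ((T -> R) * (T -> R))) : Prop :=
  forall f g, F02 (f, g) -> forall E, P E -> E <> set0 ->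
    (A E (f \+ g)%R <= A E f + A E g)%E.

(* generalized level measure; the convention A(.|emptyset) = +oo is encoded by
   letting E = set0 always satisfy the constraint A(f|E) >= t. *)
Definition level_measure (P : set (set T)) (A : set T -> (T -> R) -> \bar R)
  (mu : R -> set T -> \bar R) (f : T -> R) (t : R) : \bar R :=
  ereal_sup [set mu t E | E in [set E | P E /\ (E = set0 \/ (t%:E <= A E f)%E)]].

End Defs.

(* For a nonempty E whose aggregate of f + g reaches t, subadditivity gives
   A(f|E) + A(g|E) >= t, so A(f|E) >= s or A(g|E) >= t - s; since the family
   (mu_t) is nonincreasing, mu_t(E) is then bounded by the level measure of f
   at s or of g at t - s.  Taking s = t/2 gives the corollary. *)
From mathcomp Require Import all_boot all_order all_algebra.
From mathcomp Require Import all_classical all_reals all_analysis.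
Import Order.TTheory GRing.Theory Num.Theory.
Local Open Scope classical_set_scope.
Local Open Scope ring_scope.

Lemma EFinD_le_split {R : realDomainType} {x y : R} {a b : \bar R} :
  ((x + y)%:E <= a + b)%E -> (x%:E <= a)%E \/ (y%:E <= b)%E.
Proof.
case: (leP x%:E a) => [|ltax]; first by left.
case: (leP y%:E b) => [|ltby]; first by right.
by move=> /le_lt_trans /(_ (lteD ltax ltby)); rewrite EFinD ltxx.
Qed.

Section LevelMeasure.
Context {d : measure_display} {T : measurableType d} {R : realType}.
Variables (P : set (set T)) (A : set T -> (T -> R) -> \bar R).
Variable mu : R -> set T -> \bar R.

Lemma nonincreasing_family_le s t E : nonincreasing_family mu ->
  0 <= s -> s <= t -> measurable E -> (mu t E <= mu s E)%E.
Proof.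
move=> [_ mu_noninc] s_ge0; rewrite le_eqVlt => /predU1P[-> //|].
exact: mu_noninc.
Qed.

Lemma level_measure_ub f {t E} : P E -> E = set0 \/ (t%:E <= A E f)%E ->
  (mu t E <= level_measure P A mu f t)%E.
Proof. by move=> PE HE; apply: ereal_sup_ubound; exists E. Qed.

Lemma level_measure_add_le_max f g s t : paving P -> nonincreasing_family mu ->
  (forall E, P E -> E <> set0 -> (A E (f \+ g)%R <= A E f + A E g)%E) ->
  0 <= s <= t ->
  (level_measure P A mu (f \+ g)%R t <=
   maxe (level_measure P A mu f s) (level_measure P A mu g (t - s)))%E.
Proof.
move=> [P_meas _] mu_noninc subadd /andP[s_ge0 le_st].
apply: ge_ereal_sup => _ [E [PE HE] <-].
have mE := P_meas E PE.
rewrite le_max; apply/orP.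
have [E0|E0] := pselect (E = set0).
  left; apply: le_trans _ (level_measure_ub f PE (or_introl E0)).
  exact: nonincreasing_family_le.
have ge_t : (t%:E <= A E f + A E g)%E.
  by case: HE => // /le_trans; apply; apply: subadd.
rewrite -[t](subrKC s) in ge_t; case: (EFinD_le_split ge_t) => [ge_s|ge_ts].
- left; apply: le_trans _ (level_measure_ub f PE (or_intror ge_s)).
  exact: nonincreasing_family_le.
- right; apply: le_trans _ (level_measure_ub g PE (or_intror ge_ts)).
  by apply: nonincreasing_family_le; rewrite ?subr_ge0 ?gerBl.
Qed.

End LevelMeasure.

Theorem corollary3p15 (d : measure_display) (T : measurableType d) (R : realType)
  (P : set (set T)) (F02 : set ((T -> R) * (T -> R)))
  (mu : R -> set T -> \bar R) (A : set T -> (T -> R) -> \bar R) :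
  paving P ->
  F02 `<=` (fun fg => Fset fg.1 /\ Fset fg.2) ->
  F02 !=set0 ->
  nonincreasing_family mu ->
  CAO_family P A ->
  quasi_subadditive1 P A F02 ->
  forall (t : R) (f g : T -> R), 0 <= t -> F02 (f, g) ->
    (level_measure P A mu (f \+ g)%R t <=
     maxe (level_measure P A mu f (t / 2)) (level_measure P A mu g (t / 2)))%E.
Proof.
(* Only the subadditivity inequality is used. *)
move=> PP _ _ mu_noninc _ subadd t f g t_ge0 Ffg.
have half_t : t - t / 2 = t / 2 by rewrite {1}[t]splitr addrK.
rewrite -{2}half_t.
apply: level_measure_add_le_max => //; first exact: subadd.
by rewrite divr_ge0 //= ler_pdivrMr // ler_peMr ?ler1n.
Qed.
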